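(* Let $G$ be a directed graph on vertex set $V$, $|V|=n$, with edge weights in $\{1,\dots,M\}$, let $C>0$, and let $\pi:V\to[n]$ be a bijection such that $\pi(w(u,v))\le CMn\ln n/\|uv\|$ for all $u,v$ with $2\le|uv|<\infty$. Let $r\ge1$ and $\mathcal{H}_r=\{z\in V:\pi(z)\le CMn\ln n/r\}$. Define $A[u,z]=\|uz\|$ if $\|uz\|\le 2r$ and $u\ne z$, else $+\infty$ ($u\in V$, $z\in\mathcal{H}_r$), and $B[z,v]=\|zv\|$ if $\|zv\|\le 2r$ and $z\ne v$, else $+\infty$. Then for all $u,v\in V$ with $r\le\|uv\|<2r$: if $|uv|=1$, no $z\in\mathcal{H}_r$ satisfies $A[u,z]+B[z,v]=\|uv\|$; if $|uv|\ge2$, the vertex $z\in\mathcal{H}_r$ minimizing $\pi(z)$ subject to $A[u,z]+B[z,v]=\|uv\|$ exists and equals $w(u,v)$.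
   Context: $\|uv\|$ is the shortest path distance from $u$ to $v$; $|uv|$ is the largest number of edges in any shortest $u\to v$ path ($\infty$ if unreachable). For $2\le|uv|<\infty$, $w(u,v)$ is the vertex $w\notin\{u,v\}$ with $\|uv\|=\|uw\|+\|wv\|$ minimizing $\pi(w)$. *)

From mathcomp Require Export all_boot.
From Stdlib Require Export Reals ClassicalEpsilon.

Set Implicit Arguments.
Unset Strict Implicit.
Unset Printing Implicit Defensive.

Definition pbool (P : Prop) : bool :=
  if excluded_middle_informative P then true else false.

Section WeightedDigraph.
Variables (V : finType) (e : rel V) (wt : V -> V -> nat).

Fixpoint wlen (x : V) (p : seq V) : nat :=
  match p with
  | [::] => 0
  | y :: p' => wt x y + wlen y p'
  end.

Definition is_walk (u v : V) (p : seq V) : bool :=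
  path e u p && (last u p == v).

Definition reach (u v : V) : Prop := exists p, is_walk u v p.

Lemma reach_wlen (u v : V) :
  reach u v -> exists k, pbool (exists p, is_walk u v p /\ wlen u p = k).
Proof.
move=> [p Hp]; exists (wlen u p); rewrite /pbool.
case: excluded_middle_informative => // H; exfalso; apply: H; by exists p.
Qed.

(* ||uv||: shortest-path distance; None encodes +infinity (unreachable). *)
Definition dist (u v : V) : option nat :=
  match excluded_middle_informative (reach u v) with
  | left H => Some (ex_minn (reach_wlen H))
  | right _ => None
  end.

(* |uv|: largest number of edges of a shortest u->v walk (None if unreachable).
   Since edge weights are >= 1, a walk of weight d has at most d edges,
   so the maximum over k <= d is the maximum over all shortest walks. *)
Definition hops (u v : V) : option nat :=
  match dist u v with
  | Some d => Some (\max_(k < d.+1 |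
        pbool (exists p, is_walk u v p /\ wlen u p = d /\ size p = k)) k)
  | None => None
  end.

Definition oadd (a b : option nat) : option nat :=
  match a, b with
  | Some x, Some y => Some (x + y)
  | _, _ => None
  end.

(* w is w(u,v): the vertex w not in {u,v} with ||uv|| = ||uw|| + ||wv||
   minimizing pi(w). *)
Definition is_wvert (pi : V -> nat) (u v w : V) : Prop :=
  [/\ w != u, w != v, dist u v = oadd (dist u w) (dist w v), dist u v != None &
      forall w', w' != u -> w' != v -> dist u v = oadd (dist u w') (dist w' v) ->
        pi w <= pi w'].

Definition Amat (r : R) (u z : V) : option nat :=
  match dist u z with
  | Some a => if pbool (INR a <= 2 * r)%R && (u != z) then Some a else None
  | None => None
  end.

Definition Bmat (r : R) (z v : V) : option nat :=
  match dist z v with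
  | Some b => if pbool (INR b <= 2 * r)%R && (z != v) then Some b else None
  | None => None
  end.

Definition inH (pi : V -> nat) (C : R) (M : nat) (r : R) (z : V) : Prop :=
  (INR (pi z) <= C * INR M * INR #|V| * ln (INR #|V|) / r)%R.

End WeightedDigraph.

From Stdlib Require Import Lra.
From mathcomp Require Import zify.
Set Implicit Arguments.
Unset Strict Implicit.

(* Call z "between" u and v when z is neither endpoint and
   ||uz|| + ||zv|| = ||uv||.  Three facts about weighted digraphs with
   positive weights drive the theorem:
   - if ||uv|| <= 2r, then A[u,z] + B[z,v] = ||uv|| holds exactly when z is
     between u and v (both summands are at most ||uv||, hence within 2r);
   - some vertex is between u and v iff |uv| >= 2: gluing shortest walks
     u->z and z->v gives a shortest u->v walk with at least two edges, and
     conversely the first interior vertex of such a walk is between u and v;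
   - w(u,v) lies in H_r, since pi(w(u,v)) <= CMn ln n/||uv|| <= CMn ln n/r.
   Hence for |uv| = 1 no z satisfies the equation, while for |uv| >= 2 the
   pi-minimal solution in H_r is the pi-minimal vertex between u and v,
   i.e. w(u,v). *)

Lemma pboolE (P : Prop) : pbool P <-> P.
Proof. by rewrite /pbool; case: excluded_middle_informative. Qed.

Lemma oadd_some (x y : option nat) d : oadd x y = Some d ->
  exists a b, [/\ x = Some a, y = Some b & a + b = d].
Proof. by case: x => [a|] //; case: y => [b|] // [<-]; exists a, b. Qed.

Section Distances.
Variables (V : finType) (e : rel V) (wt : V -> V -> nat).
Hypothesis wt_pos : forall x y, e x y -> 1 <= wt x y.

Notation dist := (dist e wt).
Notation hops := (hops e wt).
Notation is_walk := (is_walk e).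
Notation wlen := (wlen wt).

Lemma distP u v d : dist u v = Some d ->
  (exists p, is_walk u v p /\ wlen u p = d) /\
  (forall p, is_walk u v p -> d <= wlen u p).
Proof.
rewrite /dist; case: excluded_middle_informative => // H [<-].
case: ex_minnP => m /pboolE Hm Hmin; split => // p Hp.
by apply: Hmin; apply/pboolE; exists p.
Qed.

Lemma walk_cat u z v p q : is_walk u z p -> is_walk z v q ->
  is_walk u v (p ++ q) /\ wlen u (p ++ q) = wlen u p + wlen z q.
Proof.
rewrite /is_walk cat_path last_cat => /andP [Hp /eqP Hl] /andP [Hq Hv].
split; first by rewrite Hp Hl Hq Hv.
by rewrite -Hl; elim: p {Hp Hl} u => [|x p IH] u //=; rewrite IH addnA.
Qed.

Lemma walk_nonempty u v p : is_walk u v p -> u != v -> 0 < size p.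
Proof. by case: p => // /andP [_ /eqP /= ->]; rewrite eqxx. Qed.

Lemma dist_walk u v p : is_walk u v p ->
  exists d, dist u v = Some d /\ d <= wlen u p.
Proof.
move=> Hp; rewrite /dist; case: excluded_middle_informative => [H|H];
  last by exfalso; apply: H; exists p.
eexists; split; first reflexivity.
by case: ex_minnP => m _; apply; apply/pboolE; exists p.
Qed.

Lemma dist_triangle u z v a b d :
  dist u z = Some a -> dist z v = Some b -> dist u v = Some d -> d <= a + b.
Proof.
move=> /distP [[p [Hp <-]] _] /distP [[q [Hq <-]] _] /distP [_ Hmin].
by have [Hpq <-] := walk_cat Hp Hq; apply: Hmin.
Qed.

Lemma size_wlen u p : path e u p -> size p <= wlen u p.
Proof.
elim: p u => [|x p IH] u //= /andP [Hux Hp].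
by have := wt_pos Hux; have := IH _ Hp; lia.
Qed.

Lemma hops_ge u v d h p : dist u v = Some d -> hops u v = Some h ->
  is_walk u v p -> wlen u p = d -> size p <= h.
Proof.
move=> Hd; rewrite /hops Hd => -[<-] Hp Hw.
have Hs : size p < d.+1 by rewrite ltnS -Hw; apply: size_wlen; case/andP: Hp.
apply: (@leq_bigmax_cond _ _ (fun k : 'I_d.+1 => nat_of_ord k) (Ordinal Hs)).
by apply/pboolE; exists p.
Qed.

Lemma hops_witness u v d h : dist u v = Some d -> hops u v = Some h ->
  2 <= h -> exists p, [/\ is_walk u v p, wlen u p = d & 2 <= size p].
Proof.
move=> Hd; rewrite /hops Hd => -[<-] Hh; apply: NNPP => Hn.
suff : \max_(k < d.+1 | pbool (exists p, is_walk u v p /\ wlen u p = d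
        /\ size p = k)) k <= 1 by move/(leq_trans Hh).
apply/bigmax_leqP => k /pboolE [p [Hp [Hw Hs]]].
rewrite leqNgt; apply/negP => Hk; apply: Hn; exists p.
by rewrite Hs.
Qed.

Definition between (u v z : V) : Prop :=
  [/\ z != u, z != v & dist u v = oadd (dist u z) (dist z v)].

(* A vertex between u and v yields a shortest walk with >= 2 edges. *)
Lemma between_hops u v z d h : dist u v = Some d -> hops u v = Some h ->
  between u v z -> 2 <= h.
Proof.
move=> Hd Hh [Hzu Hzv]; rewrite Hd => /esym /oadd_some [a [b [Ha Hb Hab]]].
have [[p [Hp Hwp]] _] := distP Ha; have [[q [Hq Hwq]] _] := distP Hb.
have [Hpq Hw] := walk_cat Hp Hq.
have := hops_ge Hd Hh Hpq; rewrite Hw Hwp Hwq Hab size_cat => /(_ erefl).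
have := walk_nonempty Hp; rewrite eq_sym Hzu => /(_ isT).
have := walk_nonempty Hq Hzv; lia.
Qed.

(* Conversely, when |uv| >= 2 the first interior vertex of a shortest walk
   with >= 2 edges is between u and v. *)
Lemma hops_between u v d h : dist u v = Some d -> hops u v = Some h ->
  2 <= h -> exists z, between u v z.
Proof.
move=> Hd Hh h2; have [_ Hmin] := distP Hd.
have [[|z [|x q]] [Hp Hw Hsize]] := hops_witness Hd Hh h2 => //.
case/andP: (Hp) => /andP [Huz Hzq] Hl.
have Hzv : is_walk z v (x :: q) by apply/andP.
have Huz1 : is_walk u z [:: z] by rewrite /is_walk /= Huz eqxx.
have Hwz := wt_pos Huz.
have Hsq : size (x :: q) <= wlen z (x :: q) by exact: size_wlen.
have {}Hw : wt u z + wlen z (x :: q) = d by [].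
exists z; split.
- apply/negP => /eqP Ezu; subst z.
  by have := Hmin _ Hzv; lia.
- apply/negP => /eqP Ezv; subst z.
  by have := Hmin _ Huz1; move: Hsq Hw => /=; lia.
- have [a [Ha /= Hale]] := dist_walk Huz1.
  have [b [Hb Hble]] := dist_walk Hzv.
  have Htri := dist_triangle Ha Hb Hd.
  have Hab : a + b = d by rewrite addn0 in Hale; lia.
  by rewrite Hd Ha Hb /= Hab.
Qed.

Lemma wvert_exists (pi : V -> nat) u v d z : dist u v = Some d ->
  between u v z -> exists w, is_wvert e wt pi u v w.
Proof.
move=> Hd Hz.
pose S := [pred w | (w != u) && (w != v) &&
            pbool (dist u v = oadd (dist u w) (dist w v))].
have HSz : S z by case: Hz => Hzu Hzv Hs; rewrite /S /= Hzu Hzv; apply/pboolE.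
case: (arg_minnP pi HSz) => w /andP [/andP [Hwu Hwv] /pboolE Hw] Hmin.
exists w; split => //; first by rewrite Hd.
by move=> w' H1 H2 H3; apply: Hmin; rewrite /S /= H1 H2; apply/pboolE.
Qed.

Lemma Amat_some r u z a : Amat e wt r u z = Some a ->
  dist u z = Some a /\ u != z.
Proof.
rewrite /Amat; case: (dist u z) => // b.
by case H: (pbool _ && _) => // -[<-]; case/andP: H.
Qed.

Lemma Bmat_some r z v b : Bmat e wt r z v = Some b ->
  dist z v = Some b /\ z != v.
Proof.
rewrite /Bmat; case: (dist z v) => // c.
by case H: (pbool _ && _) => // -[<-]; case/andP: H.
Qed.

Lemma Amat_intro r u z a : dist u z = Some a -> u != z ->
  (INR a <= 2 * r)%R -> Amat e wt r u z = Some a.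
Proof. by move=> Ha Huz Hle; rewrite /Amat Ha Huz andbT (iffRL (pboolE _) Hle). Qed.

Lemma Bmat_intro r z v b : dist z v = Some b -> z != v ->
  (INR b <= 2 * r)%R -> Bmat e wt r z v = Some b.
Proof. by move=> Hb Hzv Hle; rewrite /Bmat Hb Hzv andbT (iffRL (pboolE _) Hle). Qed.

(* When ||uv|| <= 2r the truncation in A and B is invisible on shortest
   paths: A[u,z] + B[z,v] = ||uv|| iff z is between u and v. *)
Lemma Amat_Bmat_between r u v z d : dist u v = Some d -> (INR d <= 2 * r)%R ->
  oadd (Amat e wt r u z) (Bmat e wt r z v) = Some d <-> between u v z.
Proof.
move=> Hd Hd2r; split.
- move=> /oadd_some [a [b [/Amat_some [Ha Huz] /Bmat_some [Hb Hzv] Hab]]].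
  by split=> //; [rewrite eq_sym | rewrite Hd Ha Hb -Hab].
- case=> Hzu Hzv; rewrite Hd => /esym /oadd_some [a [b [Ha Hb Hab]]].
  have Hsmall k : k <= d -> (INR k <= 2 * r)%R.
    by move=> /leP /le_INR; lra.
  have HA : Amat e wt r u z = Some a.
    by apply: Amat_intro; rewrite 1?eq_sym //; apply: Hsmall; lia.
  have HB : Bmat e wt r z v = Some b.
    by apply: Bmat_intro => //; apply: Hsmall; lia.
  by rewrite HA HB /= Hab.
Qed.

End Distances.

(* A quantity p >= 1 bounded by X/d is also bounded by X/r when 0 < r <= d;
   this places w(u,v) in H_r. *)
Lemma le_div_shrink (p X d r : R) :
  (1 <= p)%R -> (p <= X / d)%R -> (0 < r)%R -> (r <= d)%R -> (p <= X / r)%R.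
Proof.
move=> Hp HXd Hr Hrd.
have HX : (0 <= X)%R.
  have -> : X = (X / d * d)%R by field; lra.
  apply: Rmult_le_pos; lra.
apply: (Rle_trans _ _ _ HXd); apply: Rmult_le_compat_l => //.
exact: Rinv_le_contravar.
Qed.

Theorem mainTheorem10 (V : finType) (e : rel V) (wt : V -> V -> nat)
  (M : nat) (C : R) (pi : V -> nat) (r : R) :
  (forall x y, e x y -> 1 <= wt x y <= M) ->
  (0 < C)%R ->
  injective pi ->
  (forall x, 1 <= pi x <= #|V|) ->
  (forall u v d h w, dist e wt u v = Some d -> hops e wt u v = Some h ->
     2 <= h -> is_wvert e wt pi u v w ->
     (INR (pi w) <= C * INR M * INR #|V| * ln (INR #|V|) / INR d)%R) ->
  (1 <= r)%R ->
  forall u v d, dist e wt u v = Some d -> (r <= INR d < 2 * r)%R ->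
  (hops e wt u v = Some 1 ->
     forall z, inH pi C M r z ->
       oadd (Amat e wt r u z) (Bmat e wt r z v) <> Some d) /\
  (forall h, hops e wt u v = Some h -> 2 <= h ->
     exists z, [/\ inH pi C M r z,
       oadd (Amat e wt r u z) (Bmat e wt r z v) = Some d,
       (forall z', inH pi C M r z' ->
          oadd (Amat e wt r u z') (Bmat e wt r z' v) = Some d -> pi z <= pi z') &
       is_wvert e wt pi u v z]).
Proof.
move=> Hwt _ _ Hpi Hkey Hr u v d Hd [Hrd Hd2r].
have wt_pos x y : e x y -> 1 <= wt x y by move/Hwt/andP=> [].
have Hsum z := Amat_Bmat_between z Hd (Rlt_le _ _ Hd2r).
split=> [H1 z _ /Hsum Hz | h Hh h2].
  by have := between_hops wt_pos Hd H1 Hz.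
have [z0 Hz0] := hops_between wt_pos Hd Hh h2.
have [w Hw] := wvert_exists pi Hd Hz0.
have [Hwu Hwv Hwd _ Hwmin] := Hw.
exists w; split => //.
- apply: (le_div_shrink _ (Hkey _ _ _ _ _ Hd Hh h2 Hw)) => //; last lra.
  by apply: (le_INR 1); apply/leP; case/andP: (Hpi w).
- by apply/Hsum; split.
- by move=> z' _ /Hsum [Hz'u Hz'v Hz']; apply: Hwmin.
Qed.
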